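(* For every integer $n\ge 0$, $|\mathfrak D^2_{2n}(3142)|=C_n=\frac{1}{n+1}\binom{2n}{n}$, the $n$th Catalan number.
   Context: A Dumont permutation of the second kind of length $2n$ is a permutation $\pi\in\mathfrak S_{2n}$ such that for every $i=1,\dots,n$ one has $\pi(2i)<2i$ and $\pi(2i-1)\ge 2i-1$. $\mathfrak D^2_{2n}$ denotes the set of these ($\mathfrak D^2_0$ consists of the empty permutation). A permutation $\sigma$ contains a pattern $\tau\in\mathfrak S_k$ if some subsequence $(\sigma(i_1),\dots,\sigma(i_k))$, $i_1<\dots<i_k$, is order-isomorphic to $\tau$; otherwise $\sigma$ avoids $\tau$. $\mathfrak D^2_{2n}(T)$ denotes the set of permutations in $\mathfrak D^2_{2n}$ avoiding every pattern in $T$. *)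

From mathcomp Require Import all_boot all_order all_fingroup.
Set Implicit Arguments. Unset Strict Implicit. Unset Printing Implicit Defensive.

(* Permutations of {1,...,m} are modelled as s : 'S_m, permutations of
   'I_m = {0,...,m-1}; position p (0-based) corresponds to position p+1
   and value v (0-based) to value v+1. *)

Definition contains_pattern (m : nat) (s : 'S_m) (tau : seq nat) : bool :=
  [exists f : {ffun 'I_(size tau) -> 'I_m},
     [forall a : 'I_(size tau), forall b : 'I_(size tau),
        ((a < b) ==> (f a < f b)) &&
        ((val (s (f a)) < val (s (f b))) == (nth 0 tau a < nth 0 tau b))]].

Definition avoids_pattern (m : nat) (s : 'S_m) (tau : seq nat) : bool :=
  ~~ contains_pattern s tau.

(* Dumont permutation of the second kind of length 2n:
   pi(2i) < 2i and pi(2i-1) >= 2i-1 (1-based).  In 0-based terms, at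
   position p: if p is odd, s p < p; if p is even, s p >= p. *)
Definition dumont2 (n : nat) (s : 'S_(n.*2)) : bool :=
  [forall p : 'I_(n.*2), if odd p then val (s p) < p else p <= val (s p)].

From mathcomp Require Import all_boot all_order all_fingroup.
From mathcomp Require Import zify.
Set Implicit Arguments. Unset Strict Implicit. Unset Printing Implicit Defensive.

(* A Dumont
   permutation p of the second kind has p(1) = 0; let x = p(0).  If p avoids
   3142, the first x+1 entries are exactly the values 0..x: otherwise one of
   them exceeds x, so some value 0 < v < x lies further right, and x, 0, that
   entry, v form a 3142.  Moreover x is odd, since for even x the Dumont
   condition would force p(x) = x = p(0).  Hence p is the direct sum of the
   block  x 0 (rc(a) + 1),  where a has even length x-1 and rc is the
   reverse-complement, with a shorter permutation of the same kind; rc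
   preserves 3142 and turns the Dumont conditions of a into those required of
   the block.  This yields the Catalan recursion C(n+1) = \sum_k C(k) C(n-k). *)

(* [ballot n k] is the coefficient of x^n in C(x)^k, C the Catalan series:
   iterating C^(i+1) = C^i + x C^(i+2), i.e. C = 1 + x C^2, gives
   C^k = 1 + x \sum_(i < k) C^(i+2). *)
Fixpoint ballot (n k : nat) : nat :=
  if n is n'.+1 then \sum_(i < k) ballot n' i.+2 else 1.

Lemma ballot0n k : ballot 0 k = 1. Proof. by []. Qed.

Lemma ballotS0 n : ballot n.+1 0 = 0. Proof. by rewrite /= big_ord0. Qed.

Lemma ballotSS n k : ballot n.+1 k.+1 = ballot n.+1 k + ballot n k.+2.
Proof. by rewrite /= big_ord_recr. Qed.

Lemma ballot1n k : ballot 1 k = k.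
Proof. by rewrite /= sum1_card card_ord. Qed.

Lemma ballot_conv n a b :
  \sum_(j < n.+1) ballot j a * ballot (n - j) b = ballot n (a + b).
Proof.
elim: n a b => [|n IHn] a b; first by rewrite big_ord1.
elim: a => [|a IHa].
  by rewrite big_ord_recl big1 => [|i _]; rewrite ?lift0 ?ballotS0 ?mul1n ?addn0.
rewrite big_ord_recl; under eq_bigr => i _ do rewrite lift0 ballotSS mulnDl subSS.
rewrite big_split IHn addSn ballotSS -IHa big_ord_recl.
under [X in _ = _ + X + _]eq_bigr => i _ do rewrite lift0 subSS.
by rewrite !ballot0n !mul1n !addSn addnA.
Qed.

Lemma ballot_catalan_rec n :
  ballot n.+1 1 = \sum_(k < n.+1) ballot k 1 * ballot (n - k) 1.
Proof. by rewrite ballotSS ballotS0 ballot_conv. Qed.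

(* The ballot formula [ballot n k = k/(2n+k) 'C(2n+k, n)], written without division. *)
Lemma ballot_binom n k :
  ballot n.+1 k.+1 + 'C(n.*2 + k.+2, n) = 'C(n.*2 + k.+2, n.+1).
Proof.
elim: n k => [|n IHn] k; first by rewrite ballot1n bin0 bin1; lia.
have -> : n.+1.*2 + k.+2 = n.*2 + k.+4 by lia.
elim: k => [|k IHk].
  have bin_sym : 'C(n.*2 + 3, n.+2) = 'C(n.*2 + 3, n.+1).
    by rewrite -bin_sub; [congr 'C(_, _)|]; lia.
  by rewrite ballotSS ballotS0 (addnS _ 3) !binS bin_sym; have := IHn 1; lia.
by rewrite ballotSS (addnS _ k.+4) !binS; move: IHk (IHn k.+2); lia.
Qed.

Lemma ballot_catalan n : ballot n 1 = 'C(n.*2, n) %/ n.+1.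
Proof.
case: n => [|n]; first by rewrite bin0 divn1.
have := ballot_binom n 0; have := mul_bin_left (n.+1.*2) n.
rewrite doubleS addn2 => bin_mul ballot_eq.
have -> : 'C(n.*2.+2, n.+1) = ballot n.+1 1 * n.+2 by nia.
by rewrite mulnK.
Qed.

Definition permseq (s : seq nat) := uniq s && all (fun x => x < size s) s.

Lemma permseq_nth s p : permseq s -> p < size s -> nth 0 s p < size s.
Proof. by case/andP=> _ /allP sP ps; apply/sP/mem_nth. Qed.

Lemma permseq_perm_iota s : permseq s = perm_eq s (iota 0 (size s)).
Proof.
apply/idP/idP => [/andP[s_uniq /allP s_lt] | s_iota].
  have s_sub : {subset s <= iota 0 (size s)} by move=> x /s_lt; rewrite mem_iota.
  have [_ s_eq] := uniq_min_size s_uniq s_sub (eq_leq (size_iota 0 _)).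
  by apply: uniq_perm; rewrite ?iota_uniq.
rewrite /permseq (perm_uniq s_iota) iota_uniq; apply/allP => x.
by rewrite (perm_mem s_iota) mem_iota.
Qed.

Lemma permseq_mem s : permseq s -> s =i iota 0 (size s).
Proof. by rewrite permseq_perm_iota => /perm_mem. Qed.

Lemma count_lt_permseq s k : permseq s -> k <= size s ->
  count (fun x => x < k) s = k.
Proof.
rewrite permseq_perm_iota => /seq.permP -> k_le.
by rewrite -size_filter (filter_iota_ltn 0) ?size_iota.
Qed.

Lemma permseq_small_in_drop s k : permseq s -> k <= size s ->
  ~~ all (fun x => x < k) (take k s) -> has (fun x => x < k) (drop k s).
Proof.
move=> s_perm k_le; rewrite -has_predC !has_count => big_in_take.
have := count_lt_permseq s_perm k_le; rewrite -{1}(cat_take_drop k s) count_cat.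
have := count_predC (fun x => x < k) (take k s); rewrite size_takel //.
lia.
Qed.

Definition dsum (u v : seq nat) := u ++ map (addn (size u)) v.

Lemma size_dsum u v : size (dsum u v) = size u + size v.
Proof. by rewrite size_cat size_map. Qed.

Lemma nth_dsum_l u v q : q < size u -> nth 0 (dsum u v) q = nth 0 u q.
Proof. by move=> q_lt; rewrite nth_cat q_lt. Qed.

Lemma nth_dsum_r u v q : q < size v ->
  nth 0 (dsum u v) (size u + q) = nth 0 v q + size u.
Proof.
by move=> q_lt; rewrite nth_cat ltnNge leq_addr /= addKn (nth_map 0) // addnC.
Qed.

Lemma permseq_split s k : permseq s -> k <= size s ->
    all (fun x => x < k) (take k s) ->
  let v := map (subn^~ k) (drop k s) in
  [/\ permseq (take k s), permseq v & s = dsum (take k s) v].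
Proof.
move=> s_perm k_le take_lt; case/andP: s_perm => s_uniq /allP s_lt.
have size_take : size (take k s) = k := size_takel k_le.
have take_perm : permseq (take k s) by rewrite /permseq take_uniq // size_take.
have drop_ge x : x \in drop k s -> k <= x < size s.
  move=> x_drop; rewrite s_lt ?(mem_drop x_drop) // andbT leqNgt.
  apply/negP => x_lt; have : x \in take k s.
    by rewrite (permseq_mem take_perm) mem_iota size_take.
  have : uniq (take k s ++ drop k s) by rewrite cat_take_drop.
  by rewrite cat_uniq => /and3P[_ /hasPn /(_ x x_drop) /negP].
split => //.
- rewrite /permseq map_inj_in_uniq ?drop_uniq //.
    apply/allP => _ /mapP[x /drop_ge x_ge ->]; rewrite size_map size_drop; lia.
  by move=> x y /drop_ge x_ge /drop_ge y_ge; lia.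
- rewrite /dsum size_take -map_comp map_id_in ?cat_take_drop // => x /drop_ge /=.
  lia.
Qed.

Lemma permseq_dsum u v : permseq u -> permseq v -> permseq (dsum u v).
Proof.
move=> /andP[u_uniq /allP u_lt] /andP[v_uniq /allP v_lt].
rewrite /permseq /dsum cat_uniq u_uniq map_inj_uniq //=; last exact: addnI.
rewrite v_uniq size_cat size_map andbT; apply/andP; split.
  by apply/hasPn => _ /mapP[y _ ->]; apply/negP => /u_lt; lia.
rewrite all_cat; apply/andP; split; apply/allP.
  by move=> x /u_lt; lia.
by move=> _ /mapP[y /v_lt y_lt ->]; lia.
Qed.

Definition dumont (s : seq nat) :=
  all (fun p => if odd p then nth 0 s p < p else p <= nth 0 s p) (iota 0 (size s)).

Lemma dumontP s : reflect
  (forall p, p < size s -> if odd p then nth 0 s p < p else p <= nth 0 s p)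
  (dumont s).
Proof.
by apply: (iffP allP) => s_dum p p_lt; apply: s_dum; move: p_lt; rewrite mem_iota.
Qed.

Lemma dumont_dsum u v : ~~ odd (size u) ->
  dumont (dsum u v) = dumont u && dumont v.
Proof.
move=> u_even; apply/dumontP/andP => [uv_dum | [/dumontP u_dum /dumontP v_dum] p].
  split; apply/dumontP => p p_lt.
    have /uv_dum : p < size (dsum u v) by rewrite size_dsum; lia.
    by rewrite nth_dsum_l.
  have /uv_dum : size u + p < size (dsum u v) by rewrite size_dsum ltn_add2l.
  by rewrite nth_dsum_r // oddD (negbTE u_even); case: (odd p) => /=; lia.
rewrite size_dsum => p_lt; case: (ltnP p (size u)) => [p_u | u_p].
  by rewrite nth_dsum_l //; apply: u_dum.
have [q q_lt ->] : exists2 q, q < size v & p = size u + q by exists (p - size u); lia.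
rewrite nth_dsum_r // oddD (negbTE u_even) /=.
by have := v_dum q q_lt; case: (odd q); lia.
Qed.

Definition occ3142 (s : seq nat) i j k l :=
  [&& i < j, j < k, k < l, l < size s, nth 0 s j < nth 0 s l,
      nth 0 s l < nth 0 s i & nth 0 s i < nth 0 s k].

Definition has3142 (s : seq nat) :=
  [exists i : 'I_(size s), exists j : 'I_(size s), exists k : 'I_(size s),
     exists l : 'I_(size s), occ3142 s i j k l].

Lemma has3142P s : reflect (exists i j k l, occ3142 s i j k l) (has3142 s).
Proof.
apply: (iffP idP) => [|[i [j [k [l s_occ]]]]].
  by case/existsP=> i /existsP[j] /existsP[k] /existsP[l] ?; exists i, j, k, l.
have /and4P[i_lt j_lt k_lt l_lt] : [&& i < size s, j < size s, k < size s & l < size s].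
  by move: s_occ; rewrite /occ3142; lia.
apply/existsP; exists (Ordinal i_lt); apply/existsP; exists (Ordinal j_lt).
by apply/existsP; exists (Ordinal k_lt); apply/existsP; exists (Ordinal l_lt).
Qed.

Section ShiftedBlock.

Variables (s t : seq nat) (o c : nat).
Hypothesis t_in_s : forall q, q < size t -> nth 0 s (o + q) = nth 0 t q + c.

Lemma has3142_block : o + size t <= size s -> has3142 t -> has3142 s.
Proof.
move=> t_fits /has3142P[i [j [k [l t_occ]]]]; apply/has3142P.
exists (o + i), (o + j), (o + k), (o + l).
have /and4P[i_lt j_lt k_lt l_lt] : [&& i < size t, j < size t, k < size t & l < size t].
  by move: t_occ; rewrite /occ3142; lia.
by move: t_occ; rewrite /occ3142 !t_in_s //; lia.
Qed.

Lemma occ3142_block i j k l : occ3142 s i j k l -> o <= i -> l < o + size t ->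
  has3142 t.
Proof.
move=> s_occ o_i l_lt; apply/has3142P.
exists (i - o), (j - o), (k - o), (l - o).
have in_block x : o <= x <= l -> nth 0 s x = nth 0 t (x - o) + c.
  by move=> x_in; rewrite -t_in_s ?subnKC //; lia.
move: s_occ; rewrite /occ3142 => /and4P[i_j j_k k_l /and4P[_ jl li ik]].
by rewrite !in_block in jl li ik; lia.
Qed.

End ShiftedBlock.

Lemma has3142_dsum u v : all (fun x => x < size u) u ->
  has3142 (dsum u v) = has3142 u || has3142 v.
Proof.
move=> /allP u_lt; apply/idP/orP => [/has3142P[i [j [k [l uv_occ]]]] | ].
  have [l_u | u_l] := ltnP l (size u).
    left; apply: (occ3142_block (o := 0) (c := 0) _ uv_occ) => // q q_lt.
    by rewrite nth_dsum_l ?addn0.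
  right; apply: (occ3142_block (o := size u) (c := size u) _ uv_occ) => //.
  - by move=> q q_lt; rewrite nth_dsum_r.
  - (* entries of u lie below those of v, while the 2 lies below the 3 *)
    rewrite leqNgt; apply/negP => i_u.
    have : nth 0 (dsum u v) i < size u by rewrite nth_dsum_l // u_lt ?mem_nth.
    have : size u <= nth 0 (dsum u v) l.
      rewrite -(subnKC u_l) nth_dsum_r ?leq_addl //.
      by move: uv_occ; rewrite /occ3142 size_dsum; lia.
    by move: uv_occ; rewrite /occ3142; lia.
  - by move: uv_occ; rewrite /occ3142 size_dsum; lia.
case=> [u_has | v_has].
  by apply: (has3142_block (o := 0) (c := 0) _ _ u_has) => [q q_lt|];
    rewrite ?nth_dsum_l ?addn0 ?size_dsum //; lia.
apply: (has3142_block (o := size u) (c := size u) _ _ v_has) => [q q_lt|].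
  by rewrite nth_dsum_r.
by rewrite size_dsum.
Qed.

Definition revcompl (s : seq nat) := rev (map (fun x => (size s).-1 - x) s).

Lemma size_revcompl s : size (revcompl s) = size s.
Proof. by rewrite size_rev size_map. Qed.

Lemma nth_revcompl s p : p < size s ->
  nth 0 (revcompl s) p = (size s).-1 - nth 0 s ((size s).-1 - p).
Proof.
move=> p_lt; rewrite nth_rev size_map // (nth_map 0); last by lia.
by congr (_ - nth 0 s _); lia.
Qed.

Lemma permseq_revcompl s : permseq s -> permseq (revcompl s).
Proof.
case/andP=> s_uniq /allP s_lt; rewrite /permseq size_revcompl /revcompl rev_uniq.
rewrite map_inj_in_uniq // => [|x y /s_lt x_lt /s_lt y_lt]; last by lia.
by rewrite s_uniq; apply/allP => x; rewrite mem_rev => /mapP[y /s_lt y_lt ->]; lia.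
Qed.

Lemma revcomplK s : permseq s -> revcompl (revcompl s) = s.
Proof.
case/andP=> _ /allP s_lt; rewrite {1}/revcompl size_revcompl /revcompl.
rewrite map_rev revK -map_comp map_id_in // => x /s_lt /=; lia.
Qed.

Lemma odd_revcompl_index m p : ~~ odd m -> p < m -> odd (m.-1 - p) = ~~ odd p.
Proof.
move=> m_even p_lt; rewrite oddB; last by lia.
by case: m m_even p_lt => //= m; rewrite negbK => -> _; case: (odd p).
Qed.

Lemma has3142_revcompl s : permseq s -> has3142 (revcompl s) = has3142 s.
Proof.
suff has_rc t : permseq t -> has3142 (revcompl t) -> has3142 t.
  move=> s_perm; apply/idP/idP => [|s_has]; first exact: has_rc.
  by apply: has_rc; rewrite ?revcomplK ?permseq_revcompl.
move=> t_perm /has3142P[i [j [k [l t_occ]]]]; apply/has3142P.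
set m := size t; have t_lt x : x < m -> nth 0 t x < m by apply: permseq_nth.
have /and4P[i_lt j_lt k_lt l_lt] : [&& i < m, j < m, k < m & l < m].
  by move: t_occ; rewrite /occ3142 size_revcompl; lia.
exists (m.-1 - l), (m.-1 - k), (m.-1 - j), (m.-1 - i).
move: t_occ; rewrite /occ3142 !nth_revcompl // size_revcompl -/m.
by move: (t_lt (m.-1 - i)) (t_lt (m.-1 - j)) (t_lt (m.-1 - k)) (t_lt (m.-1 - l)); lia.
Qed.

Definition wrap (a : seq nat) := (size a).+1 :: 0 :: map succn (revcompl a).

Lemma size_wrap a : size (wrap a) = (size a).+2.
Proof. by rewrite /= size_map size_revcompl. Qed.

Lemma nth_wrap a q : q < size a ->
  nth 0 (wrap a) q.+2 = nth 0 (revcompl a) q + 1.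
Proof. by move=> q_lt; rewrite /= (nth_map 0) ?size_revcompl // addn1. Qed.

Lemma permseq_wrap a : permseq a -> permseq (wrap a).
Proof.
move/permseq_revcompl => /andP[rc_uniq /allP rc_lt]; rewrite size_revcompl in rc_lt.
rewrite /permseq size_wrap /= !inE map_inj_uniq; last exact: succn_inj.
rewrite rc_uniq ltnSn andbT /= -andbA; apply/and3P; split.
- by apply/negP => /mapP[x /rc_lt x_lt [size_x]]; lia.
- by apply/negP => /mapP[].
- by apply/allP => _ /mapP[x /rc_lt x_lt ->]; rewrite ltnS ltnW.
Qed.

Lemma dumont_wrap a : permseq a -> ~~ odd (size a) -> dumont (wrap a) = dumont a.
Proof.
move=> a_perm a_even; have a_lt := permseq_nth a_perm.
apply/dumontP/dumontP => [wa_dum p p_lt | a_dum [|[|q]] //].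
  have /wa_dum : ((size a).-1 - p).+2 < size (wrap a) by rewrite size_wrap; lia.
  rewrite nth_wrap ?nth_revcompl; try lia.
  have -> : (size a).-1 - ((size a).-1 - p) = p by lia.
  rewrite /= odd_revcompl_index //.
  by have := a_lt p p_lt; case: (odd p) => /=; lia.
rewrite size_wrap !ltnS => q_lt; rewrite nth_wrap // nth_revcompl //.
have /a_dum : (size a).-1 - q < size a by lia.
rewrite odd_revcompl_index //=.
by have := a_lt ((size a).-1 - q); case: (odd q) => /=; lia.
Qed.

Lemma has3142_wrap a : permseq a -> has3142 (wrap a) = has3142 a.
Proof.
move=> a_perm; rewrite -(has3142_revcompl a_perm).
have rc_in_wa q : q < size (revcompl a) ->
    nth 0 (wrap a) (2 + q) = nth 0 (revcompl a) q + 1.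
  by rewrite size_revcompl; apply: nth_wrap.
apply/idP/idP; last first.
  by apply: has3142_block rc_in_wa _; rewrite size_wrap size_revcompl.
case/has3142P => -[|[|i]] [j [k [l wa_occ]]].
- have k_lt : k < size (wrap a) by move: wa_occ; rewrite /occ3142; lia.
  have := permseq_nth (permseq_wrap a_perm) k_lt.
  by move: wa_occ; rewrite /occ3142 size_wrap /=; lia.
- by move: wa_occ; rewrite /occ3142 /=; lia.
- apply: (occ3142_block rc_in_wa wa_occ) => //.
  by move: wa_occ; rewrite /occ3142 size_wrap size_revcompl; lia.
Qed.

Lemma permseq_unwrap m w : size w = m -> permseq (m.+1 :: 0 :: w) ->
  let a := revcompl (map predn w) in permseq a /\ wrap a = m.+1 :: 0 :: w.
Proof.
move=> <-; case/andP=> /and3P[sw_notin w0 w_uniq] /allP w_lt a.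
have w_range x : x \in w -> 0 < x <= size w.
  move=> x_w; have : x < (size w).+2 by apply: w_lt; rewrite !inE x_w !orbT.
  have : x != 0 by apply: contraNneq w0 => <-.
  have : x != (size w).+1 by apply: contraNneq sw_notin => <-; rewrite inE x_w orbT.
  lia.
have pw_perm : permseq (map predn w).
  rewrite /permseq size_map map_inj_in_uniq => [|x y /w_range x_w /w_range y_w].
    apply/andP; split; first exact: w_uniq.
    by apply/allP => _ /mapP[x /w_range x_w ->]; lia.
  by lia.
split; first exact: permseq_revcompl.
rewrite /wrap /a size_revcompl size_map revcomplK // -map_comp map_id_in // => x.
by move/w_range => /= x_w; lia.
Qed.

Definition dumont3142 s := [&& permseq s, dumont s & ~~ has3142 s].

Lemma dumont3142_dsum_wrap a b : ~~ odd (size a) ->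
  dumont3142 a -> dumont3142 b -> dumont3142 (dsum (wrap a) b).
Proof.
move=> a_even /and3P[a_perm a_dum a_avoid] /and3P[b_perm b_dum b_avoid].
have /andP[_ wa_lt] := permseq_wrap a_perm.
have wa_even : ~~ odd (size (wrap a)) by rewrite size_wrap /= negbK.
rewrite /dumont3142 permseq_dsum ?permseq_wrap // dumont_dsum // dumont_wrap //.
by rewrite a_dum b_dum has3142_dsum // has3142_wrap // negb_or a_avoid b_avoid.
Qed.

Lemma dsum_wrap_inj a b a' b' : permseq a -> permseq a' ->
  dsum (wrap a) b = dsum (wrap a') b' -> a = a' /\ b = b'.
Proof.
move=> a_perm a'_perm [size_a]; move/eqP; rewrite size_map size_revcompl size_a.
rewrite eqseq_cat ?size_map ?size_revcompl // => /andP[/eqP rc_a /eqP b_b'].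
split; last by move/(inj_map (@addnI _)): b_b'.
by rewrite -(revcomplK a_perm) (inj_map succn_inj rc_a) revcomplK.
Qed.

Lemma dumont3142_head x y r : dumont3142 [:: x, y & r] ->
  [/\ y = 0, odd x & all (fun z => z < x.+1) (take x.+1 [:: x, y & r])].
Proof.
set p := [:: x, y & r]; case/and3P=> p_perm /dumontP p_dum p_avoid.
have y0 : y = 0 by have := p_dum 1 isT; rewrite /=; lia.
have nth_inj i j : i < size p -> j < size p -> nth 0 p i = nth 0 p j -> i = j.
  by move=> i_lt j_lt /eqP; rewrite nth_uniq //; [move/eqP | case/andP: p_perm].
have x_pos : 0 < x.
  rewrite lt0n; apply/eqP => x0.
  by have := nth_inj 0 1 isT isT; rewrite /= y0 => /(_ x0).
have x_lt : x < size p := permseq_nth p_perm (ltn0Sn _).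
have head_lt : all (fun z => z < x.+1) (take x.+1 p).
  apply/negPn/negP => big_in_head.
  have /hasP[v /(nthP 0)[l l_lt <-] v_lt] :=
    permseq_small_in_drop p_perm x_lt big_in_head.
  have /allPn[_ /(nthP 0)[q q_lt <-] v_big] := big_in_head.
  rewrite size_drop in l_lt; rewrite nth_drop in v_lt; rewrite size_takel // in q_lt.
  rewrite nth_take // in v_big; move/negP: p_avoid; apply; apply/has3142P.
  have q_gt1 : 1 < q.
    by move: v_big; rewrite /p; case: q q_lt => [|[|q]] //= _; rewrite ?y0 ltnS ?leqnn.
  exists 0, 1, q, (x.+1 + l).
  move: (nth_inj (x.+1 + l) 0) (nth_inj (x.+1 + l) 1) v_big v_lt l_lt.
  rewrite /occ3142 /= y0; lia.
split=> //; apply/negPn/negP => x_even.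
have /p_dum : x < size p := x_lt; rewrite (negbTE x_even) => x_le.
have x_ge : nth 0 p x < x.+1.
  by apply: (allP head_lt); rewrite -(nth_take 0 (ltnSn x)) mem_nth // size_takel.
by move: (nth_inj x 0 x_lt isT); rewrite [nth 0 p 0]/=; lia.
Qed.

Lemma dumont3142_decomp p : dumont3142 p -> ~~ odd (size p) -> 0 < size p ->
  exists a b, [/\ p = dsum (wrap a) b, ~~ odd (size a), dumont3142 a & dumont3142 b].
Proof.
case: p => [|x [|y r]] // p_good p_even _.
have [y0 x_odd head_lt] := dumont3142_head p_good; subst y.
case: x x_odd head_lt p_good p_even => // x x_odd head_lt.
case/and3P=> p_perm p_dum p_avoid _.
have x_lt : x.+2 <= size [:: x.+1, 0 & r] := permseq_nth p_perm (ltn0Sn _).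
have [u_perm v_perm p_eq] := permseq_split p_perm x_lt head_lt.
set v := map _ (drop _ _) in v_perm p_eq; rewrite [take _ _]/= in u_perm p_eq.
have [a_perm wrap_a] := permseq_unwrap (size_takel (x_lt : x <= size r)) u_perm.
set a := revcompl _ in a_perm wrap_a; rewrite -wrap_a in u_perm p_eq.
have a_even : ~~ odd (size a) by rewrite /a size_revcompl size_map size_takel.
have wa_even : ~~ odd (size (wrap a)) by rewrite size_wrap /= negbK.
move: p_dum p_avoid; rewrite p_eq dumont_dsum // has3142_dsum; last first.
  by case/andP: u_perm.
rewrite dumont_wrap // has3142_wrap // negb_or.
move=> /andP[a_dum v_dum] /andP[a_avoid v_avoid].
by exists a, v; split=> //; apply/and3P.
Qed.

Definition dumont3142_seqs n := [seq s <- permutations (iota 0 n.*2) | dumont3142 s].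

Lemma mem_dumont3142_seqs n s :
  (s \in dumont3142_seqs n) = (size s == n.*2) && dumont3142 s.
Proof.
rewrite mem_filter mem_permutations andbC.
have [<-|size_s] := eqVneq (size s) n.*2.
  by rewrite -permseq_perm_iota; apply/andb_idl => /and3P[].
apply/negbTE/negP => /andP[/perm_size].
by rewrite size_iota => /eqP; rewrite (negbTE size_s).
Qed.

Definition dumont3142_glued n :=
  [seq dsum (wrap ab.1) ab.2 | k <- iota 0 n.+1,
     ab <- [seq (a, b) | a <- dumont3142_seqs k, b <- dumont3142_seqs (n - k)]].

Lemma uniq_dumont3142_glued n : uniq (dumont3142_glued n).
Proof.
apply: allpairs_uniq_dep => [|k _|]; first exact: iota_uniq.
  by rewrite allpairs_uniq ?filter_uniq ?permutations_uniq // => -[? ?] [? ?].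
move=> p p' /allpairsPdep[k [_ [_ /allpairsP[[a b] [a_S b_S ->]] ->]]].
move=> /allpairsPdep[k' [_ [_ /allpairsP[[a' b'] [a'_S b'_S ->]] ->]]] /=.
move: a_S a'_S; rewrite /= !mem_dumont3142_seqs.
move=> /andP[/eqP size_a /and3P[a_perm _ _]] /andP[/eqP size_a' /and3P[a'_perm _ _]].
move=> /(dsum_wrap_inj a_perm a'_perm) [aa' ->]; subst a'.
by move: size_a'; rewrite size_a => /(congr1 half); rewrite !doubleK => ->.
Qed.

Lemma perm_dumont3142_glued n :
  perm_eq (dumont3142_seqs n.+1) (dumont3142_glued n).
Proof.
rewrite uniq_perm ?uniq_dumont3142_glued ?filter_uniq ?permutations_uniq // => s.
rewrite mem_dumont3142_seqs; apply/andP/idP.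
  case=> /eqP size_s s_good.
  have s_even : ~~ odd (size s) by rewrite size_s odd_double.
  have s_pos : 0 < size s by rewrite size_s.
  have [a [b [s_eq a_even a_good b_good]]] := dumont3142_decomp s_good s_even s_pos.
  have [k size_a] : exists k, size a = k.*2.
    by exists (size a)./2; rewrite -[LHS]odd_double_half (negbTE a_even).
  move: size_s; rewrite s_eq size_dsum size_wrap size_a => size_s.
  apply/allpairsPdep; exists k, (a, b); split => //; first by rewrite mem_iota; lia.
  apply/allpairsP; exists (a, b); rewrite !mem_dumont3142_seqs a_good b_good.
  by split; rewrite /= ?size_a ?andbT //; apply/eqP; lia.
case/allpairsPdep=> k [_ [/[!mem_iota] k_lt /allpairsP[[a b] [a_S b_S ->]] ->]].
rewrite /= !mem_dumont3142_seqs in a_S b_S.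
case/andP: a_S b_S => /eqP size_a a_good /andP[/eqP size_b b_good].
rewrite size_dsum size_wrap size_a size_b dumont3142_dsum_wrap ?size_a ?odd_double //.
by split=> //; apply/eqP; lia.
Qed.

Lemma size_dumont3142_seqsS n : size (dumont3142_seqs n.+1) =
  \sum_(k < n.+1) size (dumont3142_seqs k) * size (dumont3142_seqs (n - k)).
Proof.
rewrite (perm_size (perm_dumont3142_glued n)) size_allpairs_dep sumnE big_map.
under eq_bigr => k _ do rewrite size_allpairs.
by rewrite -[iota 0 n.+1]/(index_iota 0 n.+1) big_mkord.
Qed.

Lemma dumont3142_nil : dumont3142 [::].
Proof.
apply/and3P; split=> //.
by apply/has3142P => -[i [j [k [l]]]]; rewrite /occ3142 /=; lia.
Qed.

Lemma size_dumont3142_seqs n : size (dumont3142_seqs n) = ballot n 1.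
Proof.
elim/ltn_ind: n => -[|n] IHn; first by rewrite /dumont3142_seqs /= dumont3142_nil.
rewrite size_dumont3142_seqsS ballot_catalan_rec; apply: eq_bigr => k _.
by rewrite !IHn //; lia.
Qed.

Section PermToSeq.

Variable m : nat.

Definition seq_of_perm (s : 'S_m) : seq nat := [seq val (s i) | i <- enum 'I_m].

Lemma size_seq_of_perm s : size (seq_of_perm s) = m.
Proof. by rewrite size_map size_enum_ord. Qed.

Lemma nth_seq_of_perm s (i : 'I_m) : nth 0 (seq_of_perm s) i = val (s i).
Proof. by rewrite (nth_map i) ?nth_ord_enum // size_enum_ord. Qed.

Lemma permseq_seq_of_perm s : permseq (seq_of_perm s).
Proof.
apply/andP; split.
  by rewrite map_inj_uniq ?enum_uniq // => i j /val_inj; apply: perm_inj.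
apply/allP => x; rewrite size_seq_of_perm /seq_of_perm.
by move=> /mapP[i _ ->]; apply: ltn_ord.
Qed.

Lemma seq_of_perm_inj : injective seq_of_perm.
Proof.
by move=> s t st; apply/permP => i; apply/val_inj; rewrite -!nth_seq_of_perm st.
Qed.

Lemma seq_of_perm_onto t : size t = m -> permseq t -> exists s, seq_of_perm s = t.
Proof.
move=> size_t /andP[t_uniq /allP t_lt].
have t_ord (i : 'I_m) : nth 0 t i < m.
  by rewrite -[X in _ < X]size_t t_lt // mem_nth // size_t.
pose f := [ffun i => Ordinal (t_ord i)].
have f_inj : injective f.
  move=> i j /(congr1 val); rewrite !ffunE /= => /eqP.
  by rewrite nth_uniq ?size_t // => /eqP/val_inj.
exists (perm f_inj); apply: (@eq_from_nth _ 0) => [|i]; rewrite size_seq_of_perm //.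
by move=> i_lt; rewrite -[i]/(val (Ordinal i_lt)) nth_seq_of_perm permE ffunE.
Qed.

Lemma contains3142E s : contains_pattern s [:: 3; 1; 4; 2] = has3142 (seq_of_perm s).
Proof.
apply/idP/has3142P => [/existsP[f /forallP f_occ] | [i [j [k [l s_occ]]]]].
  have f_ok a b := forallP (f_occ a) b.
  pose o0 : 'I_4 := Ordinal (isT : 0 < 4). pose o1 : 'I_4 := Ordinal (isT : 1 < 4).
  pose o2 : 'I_4 := Ordinal (isT : 2 < 4). pose o3 : 'I_4 := Ordinal (isT : 3 < 4).
  exists (f o0), (f o1), (f o2), (f o3).
  rewrite /occ3142 !nth_seq_of_perm size_seq_of_perm ltn_ord.
  move: (f_ok o0 o1) (f_ok o1 o2) (f_ok o2 o3) (f_ok o1 o3) (f_ok o3 o0) (f_ok o0 o2).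
  rewrite /=; lia.
have /and4P[i_lt j_lt k_lt l_lt] : [&& i < m, j < m, k < m & l < m].
  by move: s_occ; rewrite /occ3142 size_seq_of_perm; lia.
pose I := Ordinal i_lt; pose J := Ordinal j_lt.
pose K := Ordinal k_lt; pose L := Ordinal l_lt.
apply/existsP; exists [ffun a : 'I_4 => nth I [:: I; J; K; L] a].
move: s_occ; rewrite /occ3142 -[i]/(val I) -[j]/(val J) -[k]/(val K) -[l]/(val L).
rewrite !nth_seq_of_perm /= => s_occ.
apply/forallP => a; apply/forallP => b; rewrite !ffunE.
by case: a => [[|[|[|[|a]]]] a_lt] //; case: b => [[|[|[|[|b]]]] b_lt] //=; lia.
Qed.

End PermToSeq.

Lemma dumont2E n (s : 'S_(n.*2)) : dumont2 s = dumont (seq_of_perm s).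
Proof.
apply/forallP/dumontP => [s_dum p | s_dum p].
  rewrite size_seq_of_perm => p_lt; have := s_dum (Ordinal p_lt).
  by rewrite -[p]/(val (Ordinal p_lt)) nth_seq_of_perm.
by have := s_dum p; rewrite size_seq_of_perm ltn_ord nth_seq_of_perm => ->.
Qed.

Lemma dumont3142_seq_of_perm n (s : 'S_(n.*2)) :
  dumont3142 (seq_of_perm s) = dumont2 s && avoids_pattern s [:: 3; 1; 4; 2].
Proof.
by rewrite /dumont3142 permseq_seq_of_perm dumont2E /avoids_pattern contains3142E.
Qed.

Lemma perm_seq_of_dumont2_avoiding n :
  perm_eq [seq seq_of_perm s | s <- enum
             [set s : 'S_(n.*2) | dumont2 s & avoids_pattern s [:: 3; 1; 4; 2]]]
          (dumont3142_seqs n).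
Proof.
apply: uniq_perm; first by rewrite map_inj_uniq ?enum_uniq //; apply: seq_of_perm_inj.
  by rewrite filter_uniq ?permutations_uniq.
move=> t; rewrite mem_dumont3142_seqs; apply/mapP/andP => [[s] | [/eqP size_t t_good]].
  rewrite mem_enum inE -dumont3142_seq_of_perm => s_good ->.
  by rewrite size_seq_of_perm.
have /and3P[t_perm _ _] := t_good; have [s s_t] := seq_of_perm_onto size_t t_perm.
by exists s; rewrite // mem_enum inE -dumont3142_seq_of_perm s_t.
Qed.

Theorem theorem3p1 (n : nat) :
  #|[set s : 'S_(n.*2) | dumont2 s & avoids_pattern s [:: 3; 1; 4; 2]]|
  = 'C(n.*2, n) %/ n.+1.
Proof.
rewrite -ballot_catalan -size_dumont3142_seqs cardE.
by rewrite -(perm_size (perm_seq_of_dumont2_avoiding n)) size_map.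
Qed.
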